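(* Let $G$ be a diamond-free graph and $S$ a degree-greedy stable set in $G$. Then $G$ is edge simplicial if and only if the multigraph $G_S$ equals $G-S$ (same vertex set and same multiset of edges; in particular $G_S$ has no repeated edges).
   Context: A vertex $v$ is simplicial if $N[v]$ is a clique; a clique is simplicial if it equals $N[v]$ for a simplicial vertex $v$. $G$ is edge simplicial if every edge is contained in a simplicial clique. For a linear order $\sigma=(v_1,\dots,v_n)$ of $V(G)$, the $\sigma$-greedy stable set is obtained by scanning $v_1,\dots,v_n$ in order, starting with $S=\emptyset$, and adding $v_i$ to $S$ whenever $S\cup\{v_i\}$ is stable; a degree-greedy stable set is a $\sigma$-greedy stable set for an order with $d_G(v_i)\le d_G(v_j)$ for $i<j$. For a stable set $S$, $G_S$ is the multigraph with vertex set $V(G)\setminus S$ and edge multiset $\biguplus_{v\in S}\{xy: x\ne y,\ x,y\in N_G(v)\}$ (multiset union, one copy per $v$). The diamond is $K_4$ minus one edge; diamond-free means no induced diamond. *)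

(* A finite simple graph is a symmetric irreflexive rel e on a finType T. *)
From mathcomp Require Import all_boot.
Set Implicit Arguments. Unset Strict Implicit. Unset Printing Implicit Defensive.

Section Graphs.
Variables (T : finType) (e : rel T).

Definition nbh (v : T) : {set T} := [set u | e v u].
Definition cnbh (v : T) : {set T} := v |: nbh v.
Definition deg (v : T) : nat := #|nbh v|.

Definition is_clique (A : {set T}) : bool :=
  [forall x in A, forall y in A, (x != y) ==> e x y].
Definition is_stable (A : {set T}) : bool :=
  [forall x in A, forall y in A, ~~ e x y].

Definition simplicial_vertex (v : T) : bool := is_clique (cnbh v).
Definition simplicial_clique (K : {set T}) : Prop :=
  exists v, simplicial_vertex v /\ K = cnbh v.
Definition edge_simplicial : Prop :=
  forall x y, e x y -> exists K, simplicial_clique K /\ x \in K /\ y \in K.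

(* induced diamond: K4 minus the edge cd *)
Definition diamond_free : Prop :=
  ~ exists a b c d : T,
      [/\ c != d, e a b, e a c, e a d & [/\ e b c, e b d & ~~ e c d]].

Definition greedy_stable (sigma : seq T) : {set T} :=
  foldl (fun S v => if is_stable (v |: S) then v |: S else S) set0 sigma.

Definition degree_greedy (S : {set T}) : Prop :=
  exists sigma : seq T,
    [/\ perm_eq sigma (enum T),
        pairwise (fun a b => deg a <= deg b) sigma &
        S = greedy_stable sigma].

(* Multigraph G_S: vertex set V \ S; multiplicity of the (unordered) pair {x,y},
   x != y, is the number of v in S with x, y in N(v).
   G - S: vertex set V \ S, multiplicity of {x,y} is 1 if xy is an edge, else 0.
   Both have vertex set V \ S, so equality means equal multiplicities on all
   pairs of distinct vertices of V \ S. *)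
Definition GS_mult (S : {set T}) (x y : T) : nat :=
  #|[set v in S | (x \in nbh v) && (y \in nbh v)]|.
Definition GminusS_mult (x y : T) : nat := e x y.

Definition GS_eq_GminusS (S : {set T}) : Prop :=
  forall x y, x \notin S -> y \notin S -> x != y ->
    GS_mult S x y = GminusS_mult x y.

End Graphs.

From mathcomp Require Import all_boot.
Set Implicit Arguments. Unset Strict Implicit. Unset Printing Implicit Defensive.

(* The argument only uses three properties of S: it is stable, it is
   dominating (a maximal stable set, since the greedy scan rejects a vertex
   only because of a neighbour already chosen), and, when G is edge
   simplicial, every vertex of S is simplicial.  The last property is where
   the degree order enters: if v is in S and lies in a simplicial clique N[w],
   then N[w] is contained in N[v], and deg w >= deg v, since otherwise w is
   scanned before v and is rejected because of a neighbour u of w chosen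
   before v; but u and v both lie in the clique N[w], contradicting stability.

   For a stable set S whose vertices are all simplicial, a pair x, y outside S
   has no common S-neighbour when xy is a non-edge, at most one when xy is an
   edge (two would form a diamond with x and y), and at least one when xy lies
   in a simplicial clique and S is dominating.  Conversely, if G_S = G - S then
   any two neighbours of v in S are adjacent (so v is simplicial), and every
   edge xy lies in N[v] for v = x, v = y or a common S-neighbour v of x, y. *)

Section Graph.
Variables (T : finType) (e : rel T).
Hypotheses (e_sym : symmetric e) (e_irr : irreflexive e).

Lemma stableP (A : {set T}) x y : is_stable e A -> x \in A -> y \in A -> ~~ e x y.
Proof.
by move=> /forallP stA xA yA; have /implyP/(_ xA)/forallP/(_ y)/implyP/(_ yA) := stA x.
Qed.

Lemma cliqueP (A : {set T}) x y :
  is_clique e A -> x \in A -> y \in A -> x != y -> e x y.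
Proof.
move=> /forallP clA xA yA.
by have /implyP/(_ xA)/forallP/(_ y)/implyP/(_ yA)/implyP := clA x.
Qed.

Lemma cliqueI (A : {set T}) :
  (forall x y, x \in A -> y \in A -> x != y -> e x y) -> is_clique e A.
Proof.
move=> clA; apply/forallP => x; apply/implyP => xA.
by apply/forallP => y; apply/implyP => yA; apply/implyP; apply: clA.
Qed.

Lemma in_cnbh v u : (u \in cnbh e v) = (u == v) || e v u.
Proof. by rewrite !inE. Qed.

Lemma card_cnbh v : #|cnbh e v| = (deg e v).+1.
Proof. by rewrite cardsU1 inE e_irr. Qed.

Lemma simplicial_cnbh_sub w v :
  simplicial_vertex e w -> v \in cnbh e w -> cnbh e w \subset cnbh e v.
Proof.
move=> sw vw; apply/subsetP => z zw; rewrite in_cnbh.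
have [//|zv] := eqVneq z v.
by rewrite e_sym (cliqueP sw zw vw zv).
Qed.

Lemma unstable_add (A : {set T}) v :
  is_stable e A -> ~~ is_stable e (v |: A) -> exists2 u, u \in A & e v u.
Proof.
move=> stA unst; apply/exists_inP; apply: contraNT unst => /exists_inP noNbr.
apply/forallP => x; apply/implyP => /setU1P xA.
apply/forallP => y; apply/implyP => /setU1P yA.
case: xA => [->|xA]; case: yA => [->|yA].
- by rewrite e_irr.
- by apply/negP => evy; apply: noNbr; exists y.
- by rewrite e_sym; apply/negP => evx; apply: noNbr; exists x.
- exact: stableP stA xA yA.
Qed.

Definition greedy_step (A : {set T}) (v : T) : {set T} :=
  if is_stable e (v |: A) then v |: A else A.

Lemma greedy_stableE sigma : greedy_stable e sigma = foldl greedy_step set0 sigma.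
Proof. by []. Qed.

Lemma stable_set0 : is_stable e set0.
Proof. by apply/forallP => x; rewrite inE. Qed.

Lemma greedy_fold_stable s (A : {set T}) :
  is_stable e A -> is_stable e (foldl greedy_step A s).
Proof. by elim: s A => //= a s IHs A stA; apply: IHs; rewrite /greedy_step; case: ifP. Qed.

Lemma greedy_fold_grows s (A : {set T}) : A \subset foldl greedy_step A s.
Proof.
elim: s A => //= a s IHs A; apply: subset_trans (IHs _).
by rewrite /greedy_step; case: ifP => _; [apply: subsetUr | apply: subxx].
Qed.

Lemma greedy_fold_mem s (A : {set T}) x :
  x \in foldl greedy_step A s -> (x \in A) || (x \in s).
Proof.
elim: s A => [|a s IHs] A /=; first by move->.
move/IHs => /orP[|xs]; last by rewrite inE xs !orbT.
rewrite /greedy_step; case: ifP => _; last by move->.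
by case/setU1P => [->|->]; rewrite ?inE ?eqxx ?orbT.
Qed.

Lemma greedy_stable_stable sigma : is_stable e (greedy_stable e sigma).
Proof. exact: greedy_fold_stable stable_set0. Qed.

Lemma greedy_rejected p w q :
  w \notin greedy_stable e (p ++ w :: q) ->
  exists2 u, u \in greedy_stable e (p ++ w :: q) & (u \in p) && e w u.
Proof.
rewrite greedy_stableE foldl_cat /=; set Sp := foldl greedy_step set0 p.
have stSp : is_stable e Sp := greedy_fold_stable p stable_set0.
rewrite [greedy_step Sp w]/greedy_step; case: ifP => [_|rej] wS.
  by case/negP: wS; apply: (subsetP (greedy_fold_grows _ _)); apply: setU11.
have [u uSp ewu] := unstable_add stSp (negbT rej).
exists u; first exact: (subsetP (greedy_fold_grows _ _)).
by have := greedy_fold_mem uSp; rewrite inE ewu andbT.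
Qed.

Lemma greedy_dominating sigma w :
  w \in sigma -> w \notin greedy_stable e sigma ->
  exists2 u, u \in greedy_stable e sigma & e w u.
Proof. by case/splitPr => p q /greedy_rejected[u uS /andP[_ ewu]]; exists u. Qed.

Section DegreeGreedy.
Variable S : {set T}.
Hypothesis S_greedy : degree_greedy e S.

Lemma degree_greedy_stable : is_stable e S.
Proof. by case: S_greedy => sigma [_ _ ->]; apply: greedy_stable_stable. Qed.

Lemma degree_greedy_dominating v : v \notin S -> exists2 u, u \in S & e v u.
Proof.
case: S_greedy => sigma [perm_sigma _ ->]; apply: greedy_dominating.
by rewrite (perm_mem perm_sigma) mem_enum.
Qed.

Lemma simplicial_nbr_deg v w :
  v \in S -> e w v -> simplicial_vertex e w -> deg e v <= deg e w.
Proof.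
move=> vS ewv sw; rewrite leqNgt; apply/negP => lt_wv.
have stS := degree_greedy_stable.
case: S_greedy => sigma [perm_sigma sorted_sigma defS].
have w_sigma : w \in sigma by rewrite (perm_mem perm_sigma) mem_enum.
case/splitPr: w_sigma sorted_sigma defS => p q sorted_sigma defS.
have v_notin_p : v \notin p.
  move: sorted_sigma; rewrite pairwise_cat => /and3P[/allrelP before _ _].
  by apply/negP => vp; have := before v w vp (mem_head _ _); rewrite leqNgt lt_wv.
have wS : w \notin S by apply/negP => wS; have := stableP stS wS vS; rewrite ewv.
have := @greedy_rejected p w q; rewrite -defS => /(_ wS)[u uS /andP[up ewu]].
have uv : u != v by apply: contraNneq v_notin_p => <-.
have euv : e u v by apply: (cliqueP sw _ _ uv); rewrite in_cnbh ?ewu ?ewv orbT.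
by have := stableP stS uS vS; rewrite euv.
Qed.

Lemma simplicial_cnbh_eq v w :
  v \in S -> v \in cnbh e w -> simplicial_vertex e w -> cnbh e v = cnbh e w.
Proof.
move=> vS vw sw; have [-> //|wv] := eqVneq w v.
have ewv : e w v by move: vw; rewrite in_cnbh eq_sym (negbTE wv).
apply/eqP; rewrite eq_sym eqEcard simplicial_cnbh_sub // !card_cnbh ltnS.
exact: simplicial_nbr_deg.
Qed.

(* In an edge-simplicial graph every vertex of S is simplicial: a neighbour x
   of v lies with v in a simplicial clique N[w], and then N[v] = N[w]. *)
Lemma degree_greedy_simplicial :
  edge_simplicial e -> forall v, v \in S -> simplicial_vertex e v.
Proof.
move=> es v vS; apply: cliqueI => x y; rewrite in_cnbh => /predU1P[-> yv xy|evx yv xy].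
  by move: yv; rewrite in_cnbh eq_sym (negbTE xy).
have [K [[w [sw ->]] [vw xw]]] := es v x evx.
by rewrite (simplicial_cnbh_eq vS vw sw) in yv; apply: cliqueP sw xw yv xy.
Qed.

End DegreeGreedy.

Section StableSet.
Variable S : {set T}.
Hypothesis S_stable : is_stable e S.

Lemma GS_multE x y : GS_mult e S x y = #|[set v in S | e v x && e v y]|.
Proof. by apply: eq_card => v; rewrite !inE. Qed.

Lemma stable_nbr_notin v x : v \in S -> e v x -> x \notin S.
Proof. by move=> vS evx; apply/negP => xS; have := stableP S_stable vS xS; rewrite evx. Qed.

(* Two common S-neighbours of an edge xy would span a diamond with x and y. *)
Lemma diamond_free_mult_le1 x y : diamond_free e -> e x y -> GS_mult e S x y <= 1.
Proof.
move=> dfree exy; rewrite GS_multE; apply/card_le1_eqP => a b.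
rewrite !inE => /and3P[aS eax eay] /and3P[bS ebx eby].
apply/eqP; apply: contraT; rewrite eq_sym => ab; case: dfree; exists x, y, a, b.
split=> //; rewrite ?(e_sym x) ?(e_sym y) //.
by split=> //; apply: stableP S_stable aS bS.
Qed.

Lemma simplicial_nonedge_mult0 x y :
  (forall v, v \in S -> simplicial_vertex e v) ->
  x != y -> ~~ e x y -> GS_mult e S x y = 0.
Proof.
move=> S_simp xy nexy; apply/eqP; rewrite GS_multE cards_eq0; apply/eqP/setP => v.
rewrite !inE; apply/negP => /and3P[vS evx evy].
have exy : e x y by apply: (cliqueP (S_simp v vS) _ _ xy); rewrite in_cnbh ?evx ?evy orbT.
by rewrite exy in nexy.
Qed.

(* If S is dominating, two vertices outside S sharing a simplicial clique N[w]
   have a common S-neighbour: w itself or an S-neighbour of w. *)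
Lemma dominating_simplicial_mult_gt0 x y :
  (forall w, w \notin S -> exists2 u, u \in S & e w u) ->
  x \notin S -> y \notin S ->
  (exists K, simplicial_clique e K /\ x \in K /\ y \in K) -> 0 < GS_mult e S x y.
Proof.
move=> dom xS yS [_ [[w [sw ->]] [xw yw]]].
have [s sS sw_s] : exists2 s, s \in S & s \in cnbh e w.
  have [wS|wS] := boolP (w \in S); first by exists w; rewrite // in_cnbh eqxx.
  by have [u uS ewu] := dom w wS; exists u; rewrite // in_cnbh ewu orbT.
have neq_s a : a \notin S -> s != a by move=> aS; apply: contraNneq aS => <-.
rewrite GS_multE; apply/card_gt0P; exists s.
by rewrite !inE sS !(cliqueP sw sw_s) ?neq_s.
Qed.

(* If G_S = G - S, any two neighbours of v in S are joined in G_S, hence in G. *)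
Lemma GS_eq_simplicial : GS_eq_GminusS e S -> forall v, v \in S -> simplicial_vertex e v.
Proof.
move=> GS v vS; apply: cliqueI => a b; rewrite !in_cnbh.
case/predU1P=> [->|eva]; case/predU1P=> [->|evb] ab; first by rewrite eqxx in ab.
- exact: evb.
- by rewrite e_sym.
have := GS a b (stable_nbr_notin vS eva) (stable_nbr_notin vS evb) ab.
rewrite GS_multE /GminusS_mult; case: (e a b) => // /eqP.
by rewrite cards_eq0 => /eqP/setP/(_ v); rewrite !inE vS eva evb.
Qed.

(* If G_S = G - S, an edge xy lies in N[x], in N[y], or (when x, y lie outside
   S) in N[v] for the common S-neighbour v witnessing its multiplicity 1. *)
Lemma GS_eq_edge_simplicial : GS_eq_GminusS e S -> edge_simplicial e.
Proof.
move=> GS x y exy.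
have S_clique v : v \in S -> simplicial_clique e (cnbh e v).
  by move=> vS; exists v; split=> //; apply: GS_eq_simplicial.
have [xS|xS] := boolP (x \in S).
  by exists (cnbh e x); split; [apply: S_clique | rewrite !in_cnbh eqxx exy orbT].
have [yS|yS] := boolP (y \in S).
  by exists (cnbh e y); split; [apply: S_clique | rewrite !in_cnbh eqxx e_sym exy orbT].
have xy : x != y by apply: contraTneq exy => ->; rewrite e_irr.
have : 0 < GS_mult e S x y by rewrite GS // /GminusS_mult exy.
rewrite GS_multE => /card_gt0P[v]; rewrite !inE => /and3P[vS evx evy].
by exists (cnbh e v); split; [apply: S_clique | rewrite !in_cnbh evx evy !orbT].
Qed.

End StableSet.

End Graph.

Theorem lemma10 (T : finType) (e : rel T)
  (e_sym : symmetric e) (e_irr : irreflexive e)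
  (S : {set T}) :
  diamond_free e -> degree_greedy e S ->
  (edge_simplicial e <-> GS_eq_GminusS e S).
Proof.
move=> dfree S_greedy; have stS := degree_greedy_stable S_greedy.
split; last exact: GS_eq_edge_simplicial.
move=> es x y xS yS xy; rewrite /GminusS_mult.
have S_simp := degree_greedy_simplicial e_sym e_irr S_greedy es.
case exy: (e x y) => /=.
  apply/eqP; rewrite eqn_leq diamond_free_mult_le1 //=.
  have dom := degree_greedy_dominating e_sym e_irr S_greedy.
  exact: dominating_simplicial_mult_gt0 dom xS yS (es x y exy).
exact: simplicial_nonedge_mult0 (negbT exy).
Qed.
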